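(* Let $k\in\mathbb{N}$ and $n\in\mathbb{N}\cup\{\omega\}$ with $3\le k\le n$. Then: (1) if $n$ is finite, $Q(n,k)\ge \binom{n}{\lfloor (k-1)/2\rfloor}$; (2) if $n=\omega$, $Q(\omega,k)=+\infty$, i.e. $\mathbb{Z}_2^\omega$ admits no partition into finitely many $k$-thin sets.
   Context: For $n\in\mathbb{N}\cup\{\omega\}$, $\mathbb{Z}_2^n$ is the set of binary sequences of length $n$ (indexed by $\{0,\dots,n-1\}$, resp. by $\omega=\{0,1,2,\dots\}$). The Hamming distance is $\mathrm{hd}(x,y)=|\{i: x(i)\ne y(i)\}|$, and the minimum distance of $T\subseteq\mathbb{Z}_2^n$ is $\mathrm{HD}(T)=\inf\{\mathrm{hd}(x,y): x,y\in T, x\ne y\}$ (infimum of the empty set being $+\infty$). A set $T\subseteq\mathbb{Z}_2^n$ is $k$-thin if $\mathrm{HD}(T)\ge k$. For $2\le k\le n$, $Q(n,k)$ is the smallest extended natural number $s$ such that $\mathbb{Z}_2^n$ can be partitioned into $s$ sets that are $k$-thin ($+\infty$ if there is no such finite $s$). *)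

From mathcomp Require Import all_boot.
Set Implicit Arguments. Unset Strict Implicit. Unset Printing Implicit Defensive.

Definition word (n : nat) := {ffun 'I_n -> bool}.

Definition hd (n : nat) (x y : word n) : nat := #|[set i | x i != y i]|.

Definition thin (n k : nat) (T : pred (word n)) : Prop :=
  forall x y, T x -> T y -> x != y -> k <= hd x y.

Definition partitionable (n k s : nat) : Prop :=
  exists c : word n -> 'I_s, forall j : 'I_s, thin k (fun x => c x == j).

(* Infinite words: Z_2^omega = nat -> bool. hd(x,y) >= k (hd possibly infinite)
   means there are at least k indices where x and y differ. *)
Definition hd_ge_omega (k : nat) (x y : nat -> bool) : Prop :=
  exists s : seq nat, [/\ uniq s, size s = k & forall i, i \in s -> x i != y i].

Definition thin_omega (k : nat) (T : (nat -> bool) -> Prop) : Prop :=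
  forall x y, T x -> T y -> x <> y -> hd_ge_omega k x y.

Definition partitionable_omega (k s : nat) : Prop :=
  exists c : (nat -> bool) -> 'I_s, forall j : 'I_s, thin_omega k (fun x => c x = j).

From mathcomp Require Import all_boot.

Set Implicit Arguments.
Unset Strict Implicit.
Unset Printing Implicit Defensive.

(* Two words of Hamming weight r are at distance at most 2r, so for
   r = (k-1)/2 a k-thin set contains at most one of them: a partition of
   Z_2^n into k-thin sets has at least as many pieces as there are words of
   weight r, namely C(n, r).  In Z_2^omega the unit vectors are pairwise at
   distance 2 < k, so they must all lie in different pieces, and there are
   infinitely many of them. *)

Lemma thin_colouring_eq n k s (c : word n -> 'I_s) (x y : word n) :
  (forall j, thin k (fun z => c z == j)) -> hd x y < k -> c x = c y -> x = y.
Proof.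
move=> thin_c hd_xy cxy; apply/eqP; apply: contraTT hd_xy => neq_xy.
by rewrite -leqNgt (thin_c (c x)) // cxy.
Qed.

Definition indicator_word n (A : {set 'I_n}) : word n := [ffun i => i \in A].

Lemma indicator_word_inj n : injective (@indicator_word n).
Proof.
move=> A B eqAB; apply/setP => i.
by have := congr1 (fun x : word n => x i) eqAB; rewrite !ffunE.
Qed.

Lemma hd_indicator_word n (A B : {set 'I_n}) :
  hd (indicator_word A) (indicator_word B) <= #|A| + #|B|.
Proof.
have [cardU _] := leq_card_setU A B.
rewrite /hd (leq_trans _ cardU) // subset_leq_card //.
by apply/subsetP => i; rewrite !inE !ffunE; case: (i \in A); case: (i \in B).
Qed.

Lemma binomial_le_partitionable n k s :
  0 < k -> partitionable n k s -> 'C(n, (k - 1)./2) <= s.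
Proof.
move=> k_gt0 [c thin_c]; set r := (k - 1)./2.
have r2_lt_k : r + r < k.
  have r2_le : r.*2 <= k - 1 by rewrite -geq_half_double.
  by rewrite addnn (leq_ltn_trans r2_le) // subn1 ltn_predL.
have inj_c : {in [set A : {set 'I_n} | #|A| == r] &, injective (c \o @indicator_word n)}.
  move=> A B; rewrite !inE => /eqP cardA /eqP cardB /= cAB.
  apply/indicator_word_inj/(thin_colouring_eq thin_c _ cAB).
  by rewrite (leq_ltn_trans (hd_indicator_word A B)) ?cardA ?cardB.
by have := @leq_card_in _ _ _ _ inj_c; rewrite card_draws !card_ord.
Qed.

Lemma hd_ge_omega_le_size k (x y : nat -> bool) (t : seq nat) :
  (forall i, x i != y i -> i \in t) -> hd_ge_omega k x y -> k <= size t.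
Proof. by move=> sub_t [u [uniq_u <- diff_u]]; apply: uniq_leq_size => // i /diff_u/sub_t. Qed.

Definition unit_word (m : nat) : nat -> bool := fun i => i == m.

Lemma unit_word_inj : injective unit_word.
Proof. by move=> a b /(congr1 (fun x => x a)); rewrite /unit_word eqxx => /esym/eqP. Qed.

Lemma hd_ge_omega_unit_word k a b :
  hd_ge_omega k (unit_word a) (unit_word b) -> k <= 2.
Proof.
apply: (hd_ge_omega_le_size (t := [:: a; b])) => i; rewrite !inE /unit_word.
by case: (i == a); case: (i == b).
Qed.

Lemma not_partitionable_omega k s : 2 < k -> ~ partitionable_omega k s.
Proof.
move=> k_gt2 [c thin_c].
have inj_c : injective (fun m : 'I_s.+1 => c (unit_word m)).
  move=> a b cab; apply/val_inj/eqP; apply: contraTT k_gt2 => neq_ab.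
  rewrite -leqNgt (@hd_ge_omega_unit_word k a b) //.
  apply: (thin_c (c (unit_word a))) => // /unit_word_inj/eqP.
  by rewrite (negbTE neq_ab).
by have := @leq_card _ _ _ inj_c; rewrite !card_ord ltnn.
Qed.

Theorem proposition17 (k : nat) (hk : 3 <= k) :
  (forall n : nat, k <= n ->
     forall s : nat, partitionable n k s -> 'C(n, (k - 1)./2) <= s)
  /\ (forall s : nat, ~ partitionable_omega k s).
Proof.
split=> [n _ s|s]; first exact/binomial_le_partitionable/ltnW/ltnW.
exact: not_partitionable_omega.
Qed.
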